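(* In the asymptotic framework described in the context, suppose $y>0$, $F_{\Sigma_n}(u)\to F_\Sigma(u)$ almost surely for almost every $u>0$, and the eigenvalues of each $\Sigma_n$ lie in a segment $[\sigma_{\min},\sigma_{\max}]$. Then for any real $z<0$, the fixed point equation in $s$ \[s=1+\lim_{n,d\to\infty}\frac1n\mathrm{tr}\left(zs\Sigma_n\left(I-zs\Sigma_n\right)^{-1}\right)\] has at most one non-negative real solution.
   Context: Asymptotic framework: a sequence of positive semidefinite matrices $\Sigma_n\in\mathbb{R}^{d\times d}$ indexed by $n$, with $d=d(n)$, $n,d\to\infty$, $d/n\to y\in[0,1)$. $F_{\Sigma_n}(u)=d^{-1}\sum_{i=1}^d\mathbb{I}(\lambda_i(\Sigma_n)\le u)$ is the empirical spectral distribution, $F_\Sigma$ a limiting distribution function; $0<\sigma_{\min}\le\sigma_{\max}$ do not depend on $n$. *)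

From HB Require Import structures.
From mathcomp Require Import all_boot all_order all_algebra.
From mathcomp Require Import all_classical all_reals all_analysis.
Set Implicit Arguments. Unset Strict Implicit. Unset Printing Implicit Defensive.
Import Order.TTheory GRing.Theory Num.Theory numFieldNormedType.Exports.
Local Open Scope ring_scope.
Local Open Scope classical_set_scope.

(* [lam] is a (multiset of) eigenvalue(s) of the real symmetric matrix [A]:
   A = U^T diag(lam) U with U orthogonal (spectral decomposition). *)
Definition spectral_decomp (R : realType) (d : nat) (A : 'M[R]_d) (lam : 'rV[R]_d) : Prop :=
  exists U : 'M[R]_d, U *m U^T = 1%:M /\ A = U^T *m diag_mx lam *m U.

Definition esd (R : realType) (d : nat) (lam : 'rV[R]_d) (u : R) : R :=
  (#|[set i : 'I_d | lam 0 i <= u]|)%:R / d%:R.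

Definition distribution_function (R : realType) (F : R -> R) : Prop :=
  {homo F : x y / x <= y} /\
  (forall a : R, F x @[x --> a^'+] --> F a) /\
  (F x @[x --> -oo] --> (0:R)) /\ (F x @[x --> +oo] --> (1:R)).

From HB Require Import structures.
From mathcomp Require Import all_boot all_order all_algebra.
From mathcomp Require Import all_classical all_reals all_analysis.
From mathcomp Require Import lra.
Set Implicit Arguments. Unset Strict Implicit. Unset Printing Implicit Defensive.
Import Order.TTheory GRing.Theory Num.Theory numFieldNormedType.Exports.
Local Open Scope ring_scope.
Local Open Scope classical_set_scope.

(* Diagonalising Sigma_n gives
   (1/n) tr(z s Sigma_n (I - z s Sigma_n)^-1) = (1/n) sum_i x_i / (1 - x_i)
   with x_i = z s lambda_i <= 0, and x |-> x / (1 - x) is nondecreasing below 1.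
   So for z < 0 the right-hand side of the fixed-point equation is
   nonincreasing in s >= 0, and two solutions s1 <= s2 force s2 - 1 <= s1 - 1. *)

Definition mxtrace_resolvent (F : fieldType) (n : nat) (A : 'M[F]_n) (c : F) : F :=
  \tr (c *: A *m invmx (1%:M - c *: A)).

Lemma mulmx1_invmx (R : comUnitRingType) (n : nat) (A B : 'M[R]_n) :
  A *m B = 1%:M -> invmx A = B.
Proof.
move=> AB; have [uA _] := mulmx1_unit AB.
by rewrite -[invmx A]mulmx1 -AB mulmxA mulVmx // mul1mx.
Qed.

Lemma mulmx_diagV (F : fieldType) (n : nat) (a : 'rV[F]_n) :
  (forall i, a 0 i != 0) -> diag_mx a *m diag_mx (\row_i (a 0 i)^-1) = 1%:M.
Proof.
move=> a0; rewrite mulmx_diag -diag_const_mx.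
by congr diag_mx; apply/rowP => i; rewrite !mxE mulfV.
Qed.

Section OrthogonalConjugation.

Variables (R : comUnitRingType) (n : nat) (U : 'M[R]_n).
Hypothesis UUt : U *m U^T = 1%:M.

Lemma orthoconj_mul (A B : 'M[R]_n) :
  (U^T *m A *m U) *m (U^T *m B *m U) = U^T *m (A *m B) *m U.
Proof. by rewrite !mulmxA -(mulmxA _ U) UUt mulmx1. Qed.

Lemma orthoconj1 : U^T *m 1%:M *m U = 1%:M.
Proof. by rewrite mulmx1 mulmx1C. Qed.

Lemma invmx_orthoconj (A : 'M[R]_n) :
  A \in unitmx -> invmx (U^T *m A *m U) = U^T *m invmx A *m U.
Proof. by move=> uA; apply: mulmx1_invmx; rewrite orthoconj_mul mulmxV ?orthoconj1. Qed.

Lemma mxtrace_orthoconj (A : 'M[R]_n) : \tr (U^T *m A *m U) = \tr A.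
Proof. by rewrite mxtrace_mulC mulmxA UUt mul1mx. Qed.

End OrthogonalConjugation.

Lemma mxtrace_resolvent_orthoconj (F : fieldType) (n : nat) (U : 'M[F]_n)
    (l : 'rV[F]_n) (c : F) :
  U *m U^T = 1%:M -> (forall i, c * l 0 i != 1) ->
  mxtrace_resolvent (U^T *m diag_mx l *m U) c
    = \sum_i c * l 0 i / (1 - c * l 0 i).
Proof.
move=> UUt cl1; pose a := \row_i (1 - c * l 0 i).
have a0 i : a 0 i != 0 by rewrite mxE subr_eq0 eq_sym.
have resolvent : 1%:M - c *: (U^T *m diag_mx l *m U) = U^T *m diag_mx a *m U.
  rewrite -(orthoconj1 UUt) scalemxAl scalemxAr -mulmxBl -mulmxBr; congr (_ *m _ *m _).
  by rewrite -diag_const_mx -linearZ -linearB; congr diag_mx; apply/rowP => i; rewrite !mxE.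
have aV := mulmx_diagV a0; have [ua _] := mulmx1_unit aV.
rewrite /mxtrace_resolvent resolvent invmx_orthoconj // -scalemxAl orthoconj_mul //.
rewrite mxtraceZ mxtrace_orthoconj // (mulmx1_invmx aV) mulmx_diag mxtrace_diag.
rewrite mulr_sumr; apply: eq_bigr => i _.
by rewrite !mxE mulrA.
Qed.

Lemma ler_div_1subr (R : realFieldType) (x1 x2 : R) :
  x1 <= x2 -> x2 < 1 -> x1 / (1 - x1) <= x2 / (1 - x2).
Proof.
move=> x12 x2_lt1.
have x1_pos : 0 < 1 - x1 by lra.
have x2_pos : 0 < 1 - x2 by lra.
by rewrite ler_pdivrMr // mulrAC ler_pdivlMr //; nra.
Qed.

Lemma mxtrace_resolvent_le (R : realType) (n : nat) (A : 'M[R]_n) (l : 'rV[R]_n)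
    (c1 c2 : R) :
  spectral_decomp A l -> (forall i, 0 <= l 0 i) -> c1 <= c2 ->
  (forall i, c2 * l 0 i < 1) ->
  mxtrace_resolvent A c1 <= mxtrace_resolvent A c2.
Proof.
case=> U [UUt ->] l_ge0 c12 c2l_lt1.
have c1l_le i : c1 * l 0 i <= c2 * l 0 i by rewrite ler_wpM2r.
have c1l_lt1 i : c1 * l 0 i < 1 by apply: le_lt_trans (c2l_lt1 i).
rewrite !mxtrace_resolvent_orthoconj // => [|i|i]; last 2 first.
- by rewrite lt_eqF ?c2l_lt1.
- by rewrite lt_eqF ?c1l_lt1.
by apply: ler_sum => i _; apply: ler_div_1subr (c1l_le i) (c2l_lt1 i).
Qed.

Lemma cvg_antitone_fixpoint_unique (R : realFieldType) (u : nat -> R -> R)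
    (D : {pred R}) (c s1 s2 : R) :
  (forall n, {in D &, forall a b, a <= b -> u n b <= u n a}) ->
  s1 \in D -> s2 \in D ->
  u n s1 @[n --> \oo] --> s1 - c -> u n s2 @[n --> \oo] --> s2 - c ->
  s1 = s2.
Proof.
move=> u_anti.
wlog s12 : s1 s2 / s1 <= s2.
  move=> wlog_s12 D1 D2 u1 u2; case: (leP s1 s2) => [|/ltW] s12.
    exact: wlog_s12.
  by apply/esym/wlog_s12.
move=> D1 D2 u1 u2; apply/eqP; rewrite eq_le s12 /=.
suff : s2 - c <= s1 - c by rewrite lerD2r.
by apply: (ler_cvg_to u2 u1); apply: nearW => n; apply: u_anti.
Qed.

Theorem lemmaA3 (R : realType) (d : nat -> nat) (y : R)
  (Sigma : forall n : nat, 'M[R]_(d n)) (lam : forall n : nat, 'rV[R]_(d n))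
  (FSigma : R -> R) (sigma_min sigma_max : R) :
  ((d n)%:R / n%:R : R) @[n --> \oo] --> y ->
  0 < y -> y < 1 ->
  (forall n, spectral_decomp (Sigma n) (lam n)) ->
  0 < sigma_min -> sigma_min <= sigma_max ->
  (forall n i, sigma_min <= lam n 0 i <= sigma_max) ->
  distribution_function FSigma ->
  (@lebesgue_measure R).-negligible
     [set u : R | 0 < u /\ ~ (esd (lam n) u @[n --> \oo] --> FSigma u)] ->
  forall z : R, z < 0 ->
  forall s1 s2 : R, 0 <= s1 -> 0 <= s2 ->
  ((n%:R)^-1 * \tr ((z * s1) *: Sigma n *m invmx (1%:M - (z * s1) *: Sigma n)))
     @[n --> \oo] --> s1 - 1 ->
  ((n%:R)^-1 * \tr ((z * s2) *: Sigma n *m invmx (1%:M - (z * s2) *: Sigma n)))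
     @[n --> \oo] --> s2 - 1 ->
  s1 = s2.
Proof.
move=> _ _ _ Sigma_spec min_gt0 _ lam_bnd _ _ z z_lt0 s1 s2 s1_ge0 s2_ge0.
have lam_ge0 n i : 0 <= lam n 0 i.
  by case/andP: (lam_bnd n i) => + _; apply: le_trans; apply: ltW.
apply: (@cvg_antitone_fixpoint_unique R
  (fun n s => n%:R^-1 * mxtrace_resolvent (Sigma n) (z * s)) Num.nneg 1);
  rewrite ?nnegrE // => n a b; rewrite !nnegrE => a_ge0 _ ab.
rewrite ler_wpM2l ?invr_ge0 //.
apply: (mxtrace_resolvent_le (Sigma_spec n) (lam_ge0 n)).
  by rewrite ler_wnM2l // ltW.
move=> i; apply: le_lt_trans ltr01.
by rewrite mulr_le0_ge0 // mulr_le0_ge0 // ltW.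
Qed.
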